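(* Consider the system (P) described in the context, and its constant (spatially homogeneous, time-independent) nonnegative steady states $(U,V)$. Then: (i) if $b\le0$, the only such steady state is $E_0=(0,0)$; (ii) if $b>0$ and $\frac{b\beta}{\alpha d e^{\alpha\tau}}\le1$, the constant steady states are $E_0=(0,0)$ and $E_1=(b/d,0)$; (iii) if $\frac{b\beta}{\alpha d e^{\alpha\tau}}>1$, then besides $E_0=(0,0)$ and $E_1=(b/d,0)$ there is a unique constant steady state $E_3=(U_3,V_3)$ with $U_3>0$ and $V_3>0$.
   Context: Let $\alpha,\beta,d,h>0$, $\kappa>0$, $d_1,d_2>0$, $\tau>0$ be constants and $b\in\mathbb{R}$. Let $\Gamma(x,y,a)$, $x,y\in[0,\pi]$, $a>0$, be the Green's function of $\partial_aW=d_2\partial_{xx}W-\alpha W$ on $(0,\pi)$ with Neumann conditions $\partial_xW(a,0)=\partial_xW(a,\pi)=0$ (so $\int_0^\pi\Gamma(x,y,a)\,dy=e^{-\alpha a}$). System (P): for $t>0$, $x\in(0,\pi)$, $\partial_tU=d_1\partial_{xx}U-\frac{\beta UV}{1+hV}+U\Big[b-dU-\frac{\beta}{\kappa}\int_0^\tau\int_0^\pi\Gamma(x,y,a)\frac{U(t-a,y)V(t-a,y)}{1+hV(t-a,y)}\,dy\,da\Big]$, $\partial_tV=d_2\partial_{xx}V-\alpha V+\beta\int_0^\pi\Gamma(x,y,\tau)\frac{U(t-\tau,y)V(t-\tau,y)}{1+hV(t-\tau,y)}\,dy$, with $\partial_xU=\partial_xV=0$ at $x=0,\pi$. *)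

From Stdlib Require Import Reals Lra.
From Coquelicot Require Import Coquelicot.
Open Scope R_scope.

(* Abstract hypotheses on the Neumann Green's function Gamma(x,y,a) of
   dW/da = d2 W_xx - alpha W on (0,pi): for every x in [0,pi] and a > 0,
   y |-> Gamma x y a is integrable on [0,pi] with integral e^{-alpha a}. *)
Definition green_mass (alpha : R) (Gamma : R -> R -> R -> R) : Prop :=
  forall x a, 0 <= x <= PI -> 0 < a ->
    ex_RInt (fun y => Gamma x y a) 0 PI /\
    RInt (fun y => Gamma x y a) 0 PI = exp (- alpha * a).

Definition incid (h U V : R) : R := U * V / (1 + h * V).

(* Right-hand side of the U-equation of (P) evaluated at the constant
   (space- and time-independent) functions U(t,x)=U, V(t,x)=V, at point x
   (the diffusion term vanishes for constants). *)
Definition rhsU (Gamma : R -> R -> R -> R) (beta h b d kappa tau : R)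
  (U V x : R) : R :=
  - beta * incid h U V
  + U * (b - d * U
         - beta / kappa *
           RInt (fun a => RInt (fun y => Gamma x y a * incid h U V) 0 PI) 0 tau).

Definition rhsV (Gamma : R -> R -> R -> R) (alpha beta h tau : R)
  (U V x : R) : R :=
  - alpha * V + beta * RInt (fun y => Gamma x y tau * incid h U V) 0 PI.

(* (U,V) is a constant nonnegative steady state of (P): U, V >= 0 and both
   right-hand sides vanish for every x in (0,pi) (Neumann conditions hold
   trivially for constants). *)
Definition const_steady_state (Gamma : R -> R -> R -> R)
  (alpha beta d h kappa tau b : R) (U V : R) : Prop :=
  0 <= U /\ 0 <= V /\
  forall x, 0 < x < PI ->
    rhsU Gamma beta h b d kappa tau U V x = 0 /\
    rhsV Gamma alpha beta h tau U V x = 0.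

(* For constant U, V the mass identity of the Green's function turns the two
   nonlocal terms into the incidence U V / (1 + h V) times K = ∫_0^τ e^{-αa} da
   and times e^{-ατ}, so the constant steady states are the nonnegative
   equilibria of an ODE system.  With V = 0 only the logistic equilibria 0 and
   b/d remain.  With V > 0 the V-equation forces U = m (1 + h V), where
   m = α e^{ατ} / β, and the U-equation becomes a quadratic equation for V with
   positive leading coefficient and constant term -(b - d m).  It has a
   (necessarily unique) positive root iff b > d m, which is exactly the
   threshold condition b β / (α d e^{ατ}) > 1. *)
From Stdlib Require Import Reals Lra ssreflect.
From Coquelicot Require Import Coquelicot.
Open Scope R_scope.

Lemma ex_RInt_exp_lin (c a b : R) : ex_RInt (fun s => exp (c * s)) a b.
Proof.
  apply: ex_RInt_continuous => s _.
  apply: (ex_derive_continuous (fun s => exp (c * s))).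
  by auto_derive.
Qed.

Lemma RInt_green_scal (alpha : R) (Gamma : R -> R -> R -> R) (x a c : R) :
  green_mass alpha Gamma -> 0 <= x <= PI -> 0 < a ->
  RInt (fun y => Gamma x y a * c) 0 PI = c * exp (- alpha * a).
Proof.
  move=> HGamma Hx Ha; have [Hex Hmass] := HGamma x a Hx Ha.
  rewrite (RInt_ext _ (fun y => scal c (Gamma x y a))).
  - by rewrite RInt_scal // Hmass.
  - by move=> y _; rewrite /scal /= /mult /= Rmult_comm.
Qed.

Lemma RInt_RInt_green_scal (alpha : R) (Gamma : R -> R -> R -> R) (x tau c : R) :
  green_mass alpha Gamma -> 0 <= x <= PI -> 0 <= tau ->
  RInt (fun a => RInt (fun y => Gamma x y a * c) 0 PI) 0 tau
  = c * RInt (fun a => exp (- alpha * a)) 0 tau.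
Proof.
  move=> HGamma Hx Htau.
  rewrite (RInt_ext _ (fun a => scal c (exp (- alpha * a)))).
  - by rewrite RInt_scal //; apply: ex_RInt_exp_lin.
  - move=> a; rewrite Rmin_left // Rmax_right // => Ha.
    by rewrite (RInt_green_scal _ _ _ _ _ HGamma Hx) //; lra.
Qed.

Lemma RInt_exp_lin_ge0 (c tau : R) : 0 <= tau -> 0 <= RInt (fun s => exp (c * s)) 0 tau.
Proof.
  move=> Htau; apply: RInt_ge_0 => //; first exact: ex_RInt_exp_lin.
  by move=> s _; apply: Rlt_le; apply: exp_pos.
Qed.

Lemma incid_mul_denom (h U V : R) : 1 + h * V <> 0 -> incid h U V * (1 + h * V) = U * V.
Proof. by move=> Hden; rewrite /incid; field. Qed.

(* [K] stands for ∫_0^τ e^{-αa} da and [q] for the survival factor e^{-ατ}. *)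
Definition kinetic_equilibrium (alpha beta d h kappa b K q U V : R) : Prop :=
  0 <= U /\ 0 <= V /\
  - beta * incid h U V + U * (b - d * U - beta / kappa * (incid h U V * K)) = 0 /\
  - alpha * V + beta * (incid h U V * q) = 0.

Lemma const_steady_state_iff (Gamma : R -> R -> R -> R)
    (alpha beta d h kappa tau b U V : R) :
  green_mass alpha Gamma -> 0 < tau ->
  const_steady_state Gamma alpha beta d h kappa tau b U V <->
  kinetic_equilibrium alpha beta d h kappa b
    (RInt (fun a => exp (- alpha * a)) 0 tau) (exp (- alpha * tau)) U V.
Proof.
  move=> HGamma Htau.
  have Hreduce x : 0 < x < PI ->
    rhsU Gamma beta h b d kappa tau U V x =
      - beta * incid h U V + U * (b - d * U - beta / kappa *
          (incid h U V * RInt (fun a => exp (- alpha * a)) 0 tau)) /\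
    rhsV Gamma alpha beta h tau U V x =
      - alpha * V + beta * (incid h U V * exp (- alpha * tau)).
  { move=> Hx; have Hx' : 0 <= x <= PI by lra.
    rewrite /rhsU /rhsV (RInt_RInt_green_scal _ _ _ _ _ HGamma Hx' (Rlt_le _ _ Htau)).
    by rewrite (RInt_green_scal _ _ _ _ _ HGamma Hx' Htau). }
  rewrite /const_steady_state /kinetic_equilibrium; split.
  - move=> [HU [HV Hrhs]].
    have Hmid : 0 < PI / 2 < PI by have := PI_RGT_0; lra.
    have [<- <-] := Hreduce _ Hmid; have := Hrhs _ Hmid; tauto.
  - move=> [HU [HV [HeqU HeqV]]]; do 2 split => //.
    by move=> x Hx; have [-> ->] := Hreduce _ Hx.
Qed.

Lemma pos_root_quadratic_unique (a p c v w : R) :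
  0 < a -> 0 < c -> 0 < v -> 0 < w ->
  a * v * v - p * v - c = 0 -> a * w * w - p * w - c = 0 -> w = v.
Proof.
  move=> Ha Hc Hv Hw Hrv Hrw.
  have /Rmult_integral [|Hsum] : (w - v) * (a * (w + v) - p) = 0 by nra.
  - lra.
  - have Hp : p = a * (w + v) by lra.
    subst p; have : 0 < a * (w * v) by apply: Rmult_lt_0_compat; nra.
    lra.
Qed.

Lemma pos_root_quadratic (a p c : R) : 0 < a -> 0 < c ->
  let v := (p + sqrt (p * p + 4 * a * c)) / (2 * a) in
  0 < v /\ a * v * v - p * v - c = 0.
Proof.
  move=> Ha Hc v.
  set D := p * p + 4 * a * c.
  have HD : 0 <= D by rewrite /D; nra.
  have Hs := sqrt_sqrt D HD; have Hs0 := sqrt_pos D.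
  have Hps : - p < sqrt D.
  { case: (Rlt_or_le (- p) (sqrt D)) => // Hle.
    have : sqrt D * sqrt D <= (- p) * (- p) by apply: Rmult_le_compat.
    rewrite /D in Hs *; nra. }
  split.
  - rewrite /v -/D; apply: Rdiv_lt_0_compat; lra.
  - have H2av : 2 * a * v = p + sqrt D by rewrite /v -/D; field; lra.
    apply: (Rmult_eq_reg_l (4 * a)); last lra.
    have -> : 4 * a * (a * v * v - p * v - c)
            = (2 * a * v) * (2 * a * v) - 2 * p * (2 * a * v) - 4 * a * c by ring.
    by rewrite H2av /D in Hs *; nra.
Qed.

Section KineticEquilibria.

Variables alpha beta d h kappa b K q : R.
Hypotheses (Halpha : 0 < alpha) (Hbeta : 0 < beta) (Hd : 0 < d) (Hh : 0 < h)
  (Hkappa : 0 < kappa) (HK : 0 <= K) (Hq : 0 < q).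

Local Notation equilibrium := (kinetic_equilibrium alpha beta d h kappa b K q).

(* [m] is the value of U / (1 + h V) forced by the V-equation when V > 0. *)
Let m := alpha / (beta * q).
Let A := d * m * h + beta / kappa * K * m.
Let B := b - d * m.

Let m_gt0 : 0 < m.
Proof. by apply: Rdiv_lt_0_compat; nra. Qed.

Let A_gt0 : 0 < A.
Proof.
  have Hbk : 0 < beta / kappa by apply: Rdiv_lt_0_compat.
  have Hdmh : 0 < d * m * h by apply: Rmult_lt_0_compat => //; apply: Rmult_lt_0_compat.
  have : 0 <= beta / kappa * K * m by apply: Rmult_le_pos; [apply: Rmult_le_pos|]; lra.
  rewrite /A; lra.
Qed.

Lemma kinetic_equilibrium_V0 (U : R) :
  equilibrium U 0 <-> U = 0 \/ (0 <= b /\ U = b / d).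
Proof.
  have HI0 : incid h U 0 = 0 by rewrite /incid Rmult_0_r /Rdiv Rmult_0_l.
  rewrite /kinetic_equilibrium HI0; split.
  - move=> [HU [_ [HeqU _]]].
    have : U * (b - d * U) = 0 by lra.
    case/Rmult_integral => [->|Hlog]; first by left.
    right; split; first nra.
    by field_simplify_eq; lra.
  - move=> [->|[Hb ->]]; first by repeat split; lra.
    split; first by apply: Rmult_le_pos => //; apply: Rlt_le; apply: Rinv_0_lt_compat.
    by split; [lra|split; [field; lra|lra]].
Qed.

Lemma kinetic_equilibrium_Vpos (U V : R) : 0 < V ->
  equilibrium U V <->
  U = m * (1 + h * V) /\ A * h * V * V - (h * B - A - beta) * V - B = 0.
Proof.
  move=> HV.
  have HI : U = m * (1 + h * V) -> incid h U V = m * V.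
    by move=> ->; rewrite /incid; field; nra.
  have HeqU : U = m * (1 + h * V) ->
      - beta * incid h U V + U * (b - d * U - beta / kappa * (incid h U V * K))
      = - m * (A * h * V * V - (h * B - A - beta) * V - B).
    by move=> HU; rewrite (HI HU) HU /A /B; field; lra.
  rewrite /kinetic_equilibrium; split.
  - move=> [_ [_ [HU0 HV0]]].
    have HmV : incid h U V = m * V by rewrite /m; field_simplify_eq; nra.
    have HU : U = m * (1 + h * V).
      apply: (Rmult_eq_reg_r V); last lra.
      have Hden : 1 + h * V <> 0 by nra.
      by rewrite -(incid_mul_denom h U V Hden) HmV; ring.
    split => //; apply: (Rmult_eq_reg_l (- m)); last lra.
    by rewrite -HeqU // HU0; ring.
  - move=> [HU Hquad]; have HmV := HI HU.
    split; first by rewrite HU; apply: Rmult_le_pos; [apply: Rlt_le; apply: m_gt0|nra].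
    split; first lra; split.
    + by rewrite HeqU // Hquad; ring.
    + by rewrite HmV /m; field; lra.
Qed.

Let threshold_eq : b * beta * q / (alpha * d) = b / (d * m).
Proof. by rewrite /m; field; lra. Qed.

Lemma kinetic_equilibrium_disease_free (U V : R) :
  b * beta * q / (alpha * d) <= 1 ->
  equilibrium U V <-> V = 0 /\ (U = 0 \/ (0 <= b /\ U = b / d)).
Proof.
  rewrite threshold_eq -Rdiv_le_1; last by apply: Rmult_lt_0_compat => //; apply: m_gt0.
  move=> Hsub; split; last by move=> [-> HU]; apply/kinetic_equilibrium_V0.
  move=> Heq; have [_ [HV _]] := Heq.
  case: (Rle_lt_or_eq_dec 0 V HV) => [HVpos|HV0]; last first.
    by subst V; split => //; apply/kinetic_equilibrium_V0.
  have [_ Hquad] := proj1 (kinetic_equilibrium_Vpos U V HVpos) Heq.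
  have HAhV : 0 < A * h * V * V.
    by apply: Rmult_lt_0_compat => //; apply: Rmult_lt_0_compat => //; apply: Rmult_lt_0_compat.
  have HAbV : 0 < (A + beta) * V by apply: Rmult_lt_0_compat => //; have := A_gt0; lra.
  have HBV : B * (h * V) <= 0 by rewrite /B; apply: Rmult_le_0_r; nra.
  rewrite /B in Hquad HBV; nra.
Qed.

Lemma kinetic_equilibrium_b_nonpos (U V : R) :
  b <= 0 -> equilibrium U V <-> U = 0 /\ V = 0.
Proof.
  move=> Hb; have Hdm : 0 < d * m by apply: Rmult_lt_0_compat => //; apply: m_gt0.
  rewrite kinetic_equilibrium_disease_free; last by rewrite threshold_eq -Rdiv_le_1 //; lra.
  split => [[-> [-> | [Hb_ge0 ->]]] | [-> ->]]; try tauto.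
  have Hb0 : b = 0 by lra.
  by rewrite Hb0 /Rdiv Rmult_0_l.
Qed.

Lemma kinetic_equilibrium_endemic :
  1 < b * beta * q / (alpha * d) ->
  exists U3 V3, 0 < U3 /\ 0 < V3 /\
    forall U V, equilibrium U V <->
      (U = 0 /\ V = 0) \/ (U = b / d /\ V = 0) \/ (U = U3 /\ V = V3).
Proof.
  have Hdm : 0 < d * m by apply: Rmult_lt_0_compat => //; apply: m_gt0.
  rewrite threshold_eq => /(proj2 (Rlt_div_r 1 b (d * m) Hdm)) Hsuper.
  have HB : 0 < B by rewrite /B; lra.
  have HAh : 0 < A * h by apply: Rmult_lt_0_compat => //; apply: A_gt0.
  have [HV3 Hroot] := pos_root_quadratic (A * h) (h * B - A - beta) B HAh HB.
  set V3 := (_ + sqrt _) / _ in HV3 Hroot.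
  exists (m * (1 + h * V3)), V3; split; last split => //.
    by apply: Rmult_lt_0_compat; [apply: m_gt0|nra].
  move=> U V; split.
  - move=> Heq; have [_ [HV _]] := Heq.
    case: (Rle_lt_or_eq_dec 0 V HV) => [HVpos|HV0]; last first.
      by subst V; move/kinetic_equilibrium_V0: Heq; tauto.
    have [HU Hquad] := proj1 (kinetic_equilibrium_Vpos U V HVpos) Heq.
    have HVV3 := pos_root_quadratic_unique _ _ _ _ _ HAh HB HV3 HVpos Hroot Hquad.
    by right; right; rewrite HU HVV3.
  - move=> [[-> ->]|[[-> ->]|[-> ->]]].
    + by apply/kinetic_equilibrium_V0; left.
    + by apply/kinetic_equilibrium_V0; right; split; lra.
    + by apply/(kinetic_equilibrium_Vpos _ _ HV3).
Qed.

End KineticEquilibria.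

Theorem theorem5p1 (alpha beta d h kappa d1 d2 tau b : R)
  (Gamma : R -> R -> R -> R)
  (Halpha : 0 < alpha) (Hbeta : 0 < beta) (Hd : 0 < d) (Hh : 0 < h)
  (Hkappa : 0 < kappa) (Hd1 : 0 < d1) (Hd2 : 0 < d2) (Htau : 0 < tau)
  (HGamma : green_mass alpha Gamma) :
  (b <= 0 ->
     forall U V, const_steady_state Gamma alpha beta d h kappa tau b U V <->
                 (U = 0 /\ V = 0)) /\
  (0 < b -> b * beta / (alpha * d * exp (alpha * tau)) <= 1 ->
     forall U V, const_steady_state Gamma alpha beta d h kappa tau b U V <->
                 ((U = 0 /\ V = 0) \/ (U = b / d /\ V = 0))) /\
  (b * beta / (alpha * d * exp (alpha * tau)) > 1 ->
     exists U3 V3, 0 < U3 /\ 0 < V3 /\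
       forall U V, const_steady_state Gamma alpha beta d h kappa tau b U V <->
                   ((U = 0 /\ V = 0) \/ (U = b / d /\ V = 0) \/
                    (U = U3 /\ V = V3))).
Proof.
  have HK := RInt_exp_lin_ge0 (- alpha) tau (Rlt_le _ _ Htau).
  have Hq := exp_pos (- alpha * tau).
  have HR0 : b * beta / (alpha * d * exp (alpha * tau))
             = b * beta * exp (- alpha * tau) / (alpha * d).
    have := exp_pos (alpha * tau).
    by rewrite -Ropp_mult_distr_l exp_Ropp => ?; field; lra.
  rewrite HR0; split; [|split].
  - move=> Hb U V; rewrite const_steady_state_iff //.
    exact: kinetic_equilibrium_b_nonpos.
  - move=> Hb Hsub U V; rewrite const_steady_state_iff //.
    rewrite kinetic_equilibrium_disease_free //.
    by split => [[-> [-> | [_ ->]]] | [[-> ->] | [-> ->]]]; tauto || lra.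
  - move=> /(kinetic_equilibrium_endemic alpha beta d h kappa b _ _
               Halpha Hbeta Hd Hh Hkappa HK Hq) [U3 [V3 [HU3 [HV3 Hiff]]]].
    exists U3, V3; do 2 split => //.
    by move=> U V; rewrite const_steady_state_iff.
Qed.
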